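(* Let $\mathfrak P$ be a prime ideal of $\mathcal O$ over $\mathfrak p$ and $n_\mathfrak P=\deg f_\mathfrak P$. Let $g_0=1,g_1,\dots,g_{n_\mathfrak P-1}\in A[x]$ be such that each $g_m$ is a divisor polynomial of degree $m$ of $f_\mathfrak P$ (e.g. the set ${\mathcal B}_\mathfrak P$ of the paper, built from an Okutsu frame). Then the family $\{g_0(\theta),g_1(\theta),\dots,g_{n_\mathfrak P-1}(\theta)\}\subset L$ is $w_\mathfrak P$-reduced.
   Context: Let $A$ be a Dedekind domain with fraction field $K$, $\mathfrak p$ a nonzero prime ideal of $A$ with discrete valuation $v_\mathfrak p$, $K_\mathfrak p$ the completion, $\hat A_\mathfrak p$ its valuation ring, $\hat v$ the extension of $v_\mathfrak p$ to $\overline K_\mathfrak p$. Let $f\in A[x]$ be monic irreducible separable, $\theta$ a root, $L=K(\theta)$, $\mathcal O$ the integral closure of $A$ in $L$. For a prime $\mathfrak P$ of $\mathcal O$ over $\mathfrak p$ with ramification index $e=e(\mathfrak P/\mathfrak p)$, let $v_\mathfrak P$ be its normalized discrete valuation on $L$ and $w_\mathfrak P:=v_\mathfrak P/e$; let $f_\mathfrak P$ be the corresponding monic irreducible factor of $f$ in $\hat A_\mathfrak p[x]$ and $\theta_\mathfrak P$ a root of it, so that $w_\mathfrak P(g(\theta))=\hat v(g(\theta_\mathfrak P))$ for $g\in A[x]$. For $g=\sum c_kx^k\in K_\mathfrak p[x]$, $v_0(g)=\min_k v_\mathfrak p(c_k)$. A divisor polynomial of degree $m$ ($0\le m<\deg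 f_\mathfrak P$) of $f_\mathfrak P$ is a monic $g_m\in\hat A_\mathfrak p[x]$ of degree $m$ with $\hat v(g_m(\theta_\mathfrak P))\ge\hat v(g(\theta_\mathfrak P))-v_0(g)$ for all $g\in\hat A_\mathfrak p[x]$ of degree $m$. A finite family ${\mathcal B}$ of elements of $L$ is $w$-reduced (for a map $w:L\to\mathbb Q\cup\{\infty\}$) if $w(\sum_{b\in{\mathcal B}}\lambda_b b)=\min_{b}w(\lambda_b b)$ for all $\lambda_b\in K$. *)

From HB Require Import structures.
From mathcomp Require Import all_boot all_order all_algebra all_field.
Set Implicit Arguments. Unset Strict Implicit. Unset Printing Implicit Defensive.
Import Order.TTheory GRing.Theory Num.Theory.
Local Open Scope ring_scope.

(* ---------- Valuation values: Q ∪ {∞}, with None = ∞ ---------- *)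
Definition vval := option rat.

Definition vle (x y : vval) : bool :=
  match x, y with
  | _, None => true
  | None, Some _ => false
  | Some a, Some b => a <= b
  end.
Definition vlt (x y : vval) : bool := vle x y && (x != y).
Definition vadd (x y : vval) : vval :=
  match x, y with Some a, Some b => Some (a + b) | _, _ => None end.
(* x - y, only meaningful for finite y *)
Definition vsub (x y : vval) : vval :=
  match x, y with Some a, Some b => Some (a - b) | _, _ => None end.
Definition vmin (x y : vval) : vval :=
  match x, y with
  | Some a, Some b => Some (Num.min a b)
  | None, y => y
  | x, None => x
  end.
Definition vint (z : int) : vval := Some (z%:~R).

Definition is_valuation (F : fieldType) (v : F -> vval) : Prop :=
  [/\ forall x, v x = None <-> x = 0,
      forall x y, v (x * y) = vadd (v x) (v y) &
      forall x y, vle (vmin (v x) (v y)) (v (x + y))].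

Definition is_normalized_discrete_valuation (F : fieldType) (v : F -> vval) : Prop :=
  [/\ is_valuation v,
      forall x, x <> 0 -> exists z : int, v x = vint z &
      exists x, v x = vint 1].

Section CommAlg.
Variable K : fieldType.

Definition is_subring (A : K -> Prop) : Prop :=
  [/\ A 1, forall x y, A x -> A y -> A (x - y) & forall x y, A x -> A y -> A (x * y)].

Definition is_ideal (A I : K -> Prop) : Prop :=
  [/\ forall x, I x -> A x, I 0, forall x y, I x -> I y -> I (x - y) &
      forall a x, A a -> I x -> I (a * x)].

Definition is_prime_ideal (A I : K -> Prop) : Prop :=
  [/\ is_ideal A I, ~ I 1 &
      forall a b, A a -> A b -> I (a * b) -> I a \/ I b].

Definition is_maximal_ideal (A I : K -> Prop) : Prop :=
  [/\ is_ideal A I, ~ I 1 &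
      forall J, is_ideal A J -> (forall x, I x -> J x) ->
        (forall x, J x <-> I x) \/ J 1].

Definition is_noetherian (A : K -> Prop) : Prop :=
  forall I, is_ideal A I ->
    exists s : seq K, (forall i, (i < size s)%N -> I s`_i) /\
      forall x, I x -> exists a : nat -> K, (forall i, A (a i)) /\
        x = \sum_(i < size s) a i * s`_i.

Definition is_integrally_closed_in (A : K -> Prop) : Prop :=
  forall x, (exists q : {poly K}, [/\ q \is monic, forall i, A q`_i & root q x]) -> A x.

Definition has_fraction_field (A : K -> Prop) : Prop :=
  forall x, exists a b, [/\ A a, A b, b != 0 & x = a / b].

Definition is_dedekind_with_fraction_field (A : K -> Prop) : Prop :=
  [/\ is_subring A, has_fraction_field A, is_noetherian A,
      is_integrally_closed_in A &
      forall P, is_prime_ideal A P -> (exists x, P x /\ x <> 0) -> is_maximal_ideal A P].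

Definition is_p_adic_valuation (A p : K -> Prop) (vp : K -> vval) : Prop :=
  [/\ is_normalized_discrete_valuation vp,
      forall a, A a -> vle (Some 0) (vp a) &
      forall a, A a -> (p a <-> vlt (Some 0) (vp a))].
End CommAlg.

Definition vcauchy (F : fieldType) (v : F -> vval) (s : nat -> F) : Prop :=
  forall N : int, exists n0, forall m n, (n0 <= m)%N -> (n0 <= n)%N -> vle (vint N) (v (s m - s n)).
Definition vconverges (F : fieldType) (v : F -> vval) (s : nat -> F) (l : F) : Prop :=
  forall N : int, exists n0, forall n, (n0 <= n)%N -> vle (vint N) (v (s n - l)).

Definition is_completion (K Kp : fieldType) (vp : K -> vval)
    (iota : {rmorphism K -> Kp}) (vKp : Kp -> vval) : Prop :=
  [/\ is_valuation vKp,
      forall x, vKp (iota x) = vp x,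
      forall s, vcauchy vKp s -> exists l, vconverges vKp s l &
      forall x (N : int), exists y, vle (vint N) (vKp (x - iota y))].

Definition is_valued_algebraic_closure (Kp : fieldType) (Om : closedFieldType)
    (vKp : Kp -> vval) (j : {rmorphism Kp -> Om}) (vh : Om -> vval) : Prop :=
  [/\ forall z : Om, exists q : {poly Kp}, q != 0 /\ root (map_poly j q) z,
      is_valuation vh &
      forall x, vh (j x) = vKp x].

Definition in_val_ring (F : fieldType) (v : F -> vval) (x : F) : bool := vle (Some 0) (v x).

Definition v0 (F : fieldType) (v : F -> vval) (g : {poly F}) : vval :=
  \big[vmin/None]_(i < size g) v g`_i.

Definition divisor_polynomial (Kp : fieldType) (Om : closedFieldType) (vKp : Kp -> vval)
    (j : {rmorphism Kp -> Om}) (vh : Om -> vval) (fP : {poly Kp}) (thP : Om)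
    (m : nat) (gm : {poly Kp}) : Prop :=
  [/\ (m < (size fP).-1)%N, gm \is monic, size gm = m.+1,
      forall i, in_val_ring vKp gm`_i &
      forall g : {poly Kp}, (forall i, in_val_ring vKp g`_i) -> size g = m.+1 ->
        vle (vsub (vh (map_poly j g).[thP]) (v0 vKp g)) (vh (map_poly j gm).[thP])].

Definition w_reduced (K : fieldType) (L : fieldExtType K) (w : L -> vval)
    (n : nat) (b : nat -> L) : Prop :=
  forall lam : nat -> K,
    w (\sum_(m < n) lam m *: b m) = \big[vmin/None]_(m < n) w (lam m *: b m).

(** Write [S_k] for the partial sum [\sum_(m < k) lam m *: g m(theta)] of a
    combination of the [g m(theta)].  By the ultrametric inequality,
    [w (S_(k+1)) = min (w S_k) (w (lam k *: g k(theta)))] as soon as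
    [w (S_(k+1)) <= w (lam k *: g k(theta))], so by induction it suffices to
    bound [w (H(theta))] for [H = \sum_(m <= k) lam m *: g m], a polynomial of
    degree [k] with leading coefficient [lam k].  Clearing denominators,
    [w (H(theta)) = vh (H(thP))]; dividing [H] by a coefficient of least
    valuation gives an integral polynomial of degree [k] with [v_0 = 0], and
    the divisor-polynomial property of [g k] yields
    [vh (H(thP)) <= v_0(H) + vh (g k(thP)) <= vp (lam k) + w (g k(theta))]. *)
From Pilot Require Import Defs.
From HB Require Import structures.
From mathcomp Require Import all_boot all_order all_algebra all_field.
From mathcomp Require Import lra.

Set Implicit Arguments. Unset Strict Implicit. Unset Printing Implicit Defensive.
Import Order.TTheory GRing.Theory Num.Theory.
Local Open Scope ring_scope.

Lemma vminA : associative vmin.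
Proof. by case=> [a|]; case=> [b|]; case=> [c|] //=; rewrite minA. Qed.

Lemma vminC : commutative vmin.
Proof. by case=> [a|]; case=> [b|] //=; rewrite minC. Qed.

Lemma vmin0 : left_id None vmin. Proof. by case. Qed.

(* Declaring [vmin] a monoid law is what lets the generic [bigop] lemmas
   (e.g. [big_ord_recr]) rewrite the [\big[vmin/None]] of [Defs]. *)
HB.instance Definition _ := Monoid.isComLaw.Build vval None vmin vminA vminC vmin0.

Lemma vle_trans x y z : vle x y -> vle y z -> vle x z.
Proof. by case: x; case: y; case: z => //= a b c; apply: le_trans. Qed.

Lemma vle_total x y : vle x y || vle y x.
Proof. by case: x; case: y => //= a b; apply: le_total. Qed.

Lemma vle_anti x y : vle x y -> vle y x -> x = y.
Proof. by case: x => [a|]; case: y => [b|] //= h1 h2; rewrite (@le_anti _ _ a b) ?h1. Qed.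

Lemma vle_inf x : vle x None.
Proof. by case: x. Qed.

Lemma vle_minl x y : vle (vmin x y) x.
Proof. by case: x; case: y => //= a b; rewrite ge_min lexx. Qed.

Lemma vle_minr x y : vle (vmin x y) y.
Proof. by case: x; case: y => //= a b; rewrite ge_min lexx orbT. Qed.

Lemma vmin_l x y : vle x y -> vmin x y = x.
Proof. by case: x; case: y => //= a b h; rewrite min_l. Qed.

Lemma vmin_r x y : vle y x -> vmin x y = y.
Proof. by case: x; case: y => //= a b h; rewrite min_r. Qed.

Lemma vle_vaddr x y z : vle x y -> vle (vadd x z) (vadd y z).
Proof. by case: x; case: y; case: z => //= a b c; rewrite lerD2r. Qed.

Lemma vaddI a x y : vadd (Some a) x = vadd (Some a) y -> x = y.
Proof. by case: x => [b|]; case: y => [c|] //= [] /addrI ->. Qed.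

Lemma bigvmin_le n (F : nat -> vval) i : (i < n)%N ->
  vle (\big[vmin/None]_(l < n) F l) (F i).
Proof.
elim: n => [//|n IHn]; rewrite ltnS leq_eqVlt big_ord_recr /=.
case/orP=> [/eqP -> | lt_in]; first exact: vle_minr.
exact: vle_trans (vle_minl _ _) (IHn lt_in).
Qed.

Lemma bigvmin_attained n (F : nat -> vval) : (0 < n)%N ->
  exists2 i, (i < n)%N & \big[vmin/None]_(l < n) F l = F i.
Proof.
elim: n => [//|[_|n IHn] _].
  by exists 0%N; rewrite // big_ord_recr big_ord0.
rewrite big_ord_recr /=; have [i lt_in ->] := IHn isT.
case/orP: (vle_total (F i) (F n.+1)) => [/vmin_l -> | /vmin_r ->].
  by exists i; first exact: ltnW.
by exists n.+1.
Qed.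

Section Valuation.
Variables (F : fieldType) (v : F -> vval).
Hypothesis v_val : is_valuation v.

Lemma valuation0 : v 0 = None.
Proof. by case: v_val => h _ _; apply/h. Qed.

Lemma valuation_neq0 x : x != 0 -> exists a, v x = Some a.
Proof.
case: v_val => h _ _ x_neq0; case vx: (v x) => [a|]; first by exists a.
by move/h: vx x_neq0 => ->; rewrite eqxx.
Qed.

Lemma valuationM x y : v (x * y) = vadd (v x) (v y).
Proof. by case: v_val. Qed.

Lemma valuationD x y : vle (vmin (v x) (v y)) (v (x + y)).
Proof. by case: v_val. Qed.

Lemma valuation1 : v 1 = Some 0.
Proof.
have [a va] := valuation_neq0 (oner_neq0 F).
by have := valuationM 1 1; rewrite mulr1 va => -[] aa; congr Some; lra.
Qed.

Lemma valuationN x : v (- x) = v x.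
Proof.
have [a va] : exists a, v (-1) = Some a.
  by apply: valuation_neq0; rewrite oppr_eq0 oner_eq0.
have a0 : a = 0.
  by have := valuationM (-1) (-1); rewrite mulrNN mulr1 valuation1 va => -[] aa; lra.
by rewrite -mulN1r valuationM va a0; case: (v x) => //= b; rewrite add0r.
Qed.

Lemma valuationDE x y : vle (v (x + y)) (v y) -> v (x + y) = vmin (v x) (v y).
Proof.
move=> le_sy; have le_ms := valuationD x y.
case/orP: (vle_total (v y) (v x)) => [le_yx | le_xy].
  by rewrite vmin_r // in le_ms *; apply: vle_anti.
rewrite vmin_l // in le_ms *; apply: vle_anti _ le_ms.
by have := valuationD (x + y) (- y); rewrite addrK valuationN vmin_l.
Qed.

End Valuation.

Lemma v0_le_coef (F : fieldType) (v : F -> vval) (G : {poly F}) l :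
  is_valuation v -> vle (v0 v G) (v G`_l).
Proof.
move=> v_val; case: (ltnP l (size G)) => [lt_lG | le_Gl].
  exact: (bigvmin_le (fun i => v G`_i)).
by rewrite nth_default // valuation0 // vle_inf.
Qed.

Lemma v0_attained (F : fieldType) (v : F -> vval) (G : {poly F}) :
  is_valuation v -> exists i, v0 v G = v G`_i.
Proof.
move=> v_val; case: (posnP (size G)) => [/eqP | G_gt0].
  rewrite size_poly_eq0 => /eqP ->; exists 0%N.
  by rewrite /v0 size_poly0 big_ord0 coef0 valuation0.
by rewrite /v0; have [i _ ->] := bigvmin_attained (fun i => v G`_i) G_gt0; exists i.
Qed.

Lemma vle_vsub_vadd x y z (a b : rat) : b + a = 0 -> vle z (Some 0) ->
  vle (vsub (vadd (Some b) x) z) y -> vle x (vadd (Some a) y).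
Proof. by case: x => [x|]; case: y => [y|]; case: z => [z|] //= *; lra. Qed.

(* The defining inequality of a divisor polynomial only covers integral [G];
   scaling by the inverse of a coefficient of least valuation removes that
   restriction. *)
Lemma divisor_polynomial_bound (Kp : fieldType) (Om : closedFieldType)
    (vKp : Kp -> vval) (j : {rmorphism Kp -> Om}) (vh : Om -> vval)
    (fP : {poly Kp}) (thP : Om) m (gm G : {poly Kp}) :
  is_valuation vKp -> is_valuation vh -> (forall x, vh (j x) = vKp x) ->
  divisor_polynomial vKp j vh fP thP m gm -> size G = m.+1 ->
  vle (vh (map_poly j G).[thP]) (vadd (v0 vKp G) (vh (map_poly j gm).[thP])).
Proof.
move=> vKp_val vh_val vhj [_ _ _ _ gm_min] size_G.
have [i v0_G] := v0_attained G vKp_val; rewrite v0_G.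
have [->|Gi_neq0] := eqVneq G`_i 0; first by rewrite valuation0 // vle_inf.
have [a va] := valuation_neq0 vKp_val Gi_neq0.
have [b vb] : exists b, vKp (G`_i)^-1 = Some b.
  by apply: (valuation_neq0 vKp_val); rewrite invr_eq0.
have ba0 : b + a = 0.
  by have := valuationM vKp_val (G`_i)^-1 G`_i; rewrite mulVf // valuation1 // va vb => -[].
have dG_int l : in_val_ring vKp ((G`_i)^-1 *: G)`_l.
  rewrite /in_val_ring coefZ valuationM // vb.
  by have := v0_le_coef G l vKp_val; rewrite v0_G va; case: (vKp G`_l) => //= c; lra.
have v0_dG : vle (v0 vKp ((G`_i)^-1 *: G)) (Some 0).
  by apply: vle_trans (v0_le_coef _ i vKp_val) _; rewrite coefZ mulVf // valuation1.
have := gm_min _ dG_int; rewrite size_scale ?invr_eq0 // => /(_ size_G).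
rewrite map_polyZ hornerZ valuationM // vhj vb va.
exact: vle_vsub_vadd ba0 v0_dG.
Qed.

Lemma w_reduced_of_lead_bound (K : fieldType) (L : fieldExtType K) (w : L -> vval)
    n (b : nat -> L) :
  is_valuation w ->
  (forall k (lam : nat -> K), (k < n)%N ->
     vle (w (\sum_(m < k.+1) lam m *: b m)) (w (lam k *: b k))) ->
  w_reduced w n b.
Proof.
move=> w_val lead_bound lam.
suff: forall k, (k <= n)%N ->
    w (\sum_(m < k) lam m *: b m) = \big[vmin/None]_(m < k) w (lam m *: b m).
  by move=> wk; apply: (wk n (leqnn n)).
elim=> [|k IHk] lt_kn.
  rewrite !big_ord0; exact: valuation0 w_val.
rewrite !big_ord_recr /= -IHk; last exact: ltnW.
by apply: (valuationDE w_val); have := lead_bound k lam lt_kn; rewrite big_ord_recr.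
Qed.

Section TriangularCombination.
Variables (R : idomainType) (k : nat) (g : nat -> {poly R}) (lam : nat -> R).
Hypothesis size_g : forall m, (m <= k)%N -> size (g m) = m.+1.
Hypothesis gk_monic : g k \is monic.
Hypothesis lamk_neq0 : lam k != 0.

Let size_lower_terms :
  (size (\sum_(m < k) lam m *: g m)%R < size (lam k *: g k))%N.
Proof.
rewrite size_scale // size_g // ltnS; apply: leq_trans (size_sum _ _ _) _.
apply/bigmax_leqP => m _; apply: leq_trans (size_scale_leq _ _) _.
by rewrite size_g // ltnW.
Qed.

Lemma size_triangular_comb : size (\sum_(m < k.+1) lam m *: g m) = k.+1.
Proof.
by rewrite big_ord_recr /= addrC (size_polyDl size_lower_terms) size_scale // size_g.
Qed.

Lemma lead_coef_triangular_comb : lead_coef (\sum_(m < k.+1) lam m *: g m) = lam k.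
Proof.
rewrite big_ord_recr /= addrC (lead_coefDl size_lower_terms).
by rewrite lead_coefZ (monicP gk_monic) mulr1.
Qed.

End TriangularCombination.

Lemma subring0 (K : fieldType) (A : K -> Prop) : is_subring A -> A 0.
Proof. by case=> A1 AB _; rewrite -(subrr 1); apply: AB. Qed.

Lemma common_denominator (K : fieldType) (A : K -> Prop) (lam : nat -> K) n :
  is_subring A -> has_fraction_field A ->
  exists c, [/\ A c, c != 0 & forall m, (m < n)%N -> A (c * lam m)].
Proof.
move=> [A1 _ AM] frac; elim: n => [|n [c [Ac c_neq0 Aclam]]].
  by exists 1; rewrite oner_eq0.
have [a [b [Aa Ab b_neq0 lam_n]]] := frac (lam n).
exists (c * b); split; [exact: AM | by rewrite mulf_neq0 |].
move=> m; rewrite ltnS leq_eqVlt => /orP[/eqP -> | lt_mn].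
  by rewrite lam_n -mulrA (mulrC b) divfK //; apply: AM.
by rewrite mulrAC; apply: AM => //; apply: Aclam.
Qed.

(* Multiplying by a common denominator [c] shifts both sides by [vp c]. *)
Lemma eval_valuations_agree (K Kp Om : fieldType) (A : K -> Prop) (vp : K -> vval)
    (iota : {rmorphism K -> Kp}) (j : {rmorphism Kp -> Om}) (vh : Om -> vval)
    (L : fieldExtType K) (w : L -> vval) (theta : L) (thP : Om) :
  is_subring A -> has_fraction_field A -> is_valuation vp ->
  is_valuation w -> is_valuation vh ->
  (forall x, w (in_alg L x) = vp x) -> (forall x, vh (j (iota x)) = vp x) ->
  (forall g : {poly K}, (forall i, A g`_i) ->
     w (map_poly (in_alg L) g).[theta] = vh (map_poly j (map_poly iota g)).[thP]) ->
  forall h : {poly K},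
    w (map_poly (in_alg L) h).[theta] = vh (map_poly j (map_poly iota h)).[thP].
Proof.
move=> subA frac vp_val w_val vh_val w_alg vh_iota w_vh h.
have [c [_ c_neq0 Ach]] := common_denominator (fun i => h`_i) (size h) subA frac.
have Ach' i : A (c *: h)`_i.
  rewrite coefZ; case: (ltnP i (size h)) => [/Ach // | le_hi].
  by rewrite nth_default // mulr0; apply: subring0.
have [a va] := valuation_neq0 vp_val c_neq0.
move: (w_vh _ Ach'); rewrite !map_polyZ !hornerZ.
by rewrite !valuationM // w_alg vh_iota va => /vaddI.
Qed.

Theorem mainTheorem2
  (K : fieldType) (A p : K -> Prop) (vp : K -> vval)
  (hA : is_dedekind_with_fraction_field A)
  (hp : is_prime_ideal A p) (hp0 : exists x, p x /\ x <> 0)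
  (hvp : is_p_adic_valuation A p vp)
  (Kp : fieldType) (iota : {rmorphism K -> Kp}) (vKp : Kp -> vval)
  (hKp : is_completion vp iota vKp)
  (Om : closedFieldType) (j : {rmorphism Kp -> Om}) (vh : Om -> vval)
  (hOm : is_valued_algebraic_closure vKp j vh)
  (f : {poly K}) (hfA : forall i, A f`_i) (hfm : f \is monic)
  (hfirr : irreducible_poly f) (hfsep : separable_poly f)
  (L : fieldExtType K) (theta : L)
  (hroot : root (map_poly (in_alg L) f) theta) (hgen : <<1; theta>>%VS = fullv)
  (w : L -> vval) (hw : is_valuation w) (hwext : forall x : K, w (in_alg L x) = vp x)
  (fP : {poly Kp}) (hfPm : fP \is monic) (hfPA : forall i, in_val_ring vKp fP`_i)
  (hfPirr : irreducible_poly fP) (hfPdvd : fP %| map_poly iota f)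
  (thP : Om) (hthP : root (map_poly j fP) thP)
  (hwP : forall g : {poly K}, (forall i, A g`_i) ->
     w (map_poly (in_alg L) g).[theta] = vh (map_poly j (map_poly iota g)).[thP])
  (g : nat -> {poly K}) (hg0 : g 0%N = 1)
  (hg : forall m : nat, (m < (size fP).-1)%N ->
     (forall i, A (g m)`_i) /\ divisor_polynomial vKp j vh fP thP m (map_poly iota (g m))) :
  w_reduced w (size fP).-1 (fun m => (map_poly (in_alg L) (g m)).[theta]).
Proof.
have [subA frac _ _ _] := hA.
have [[vp_val _ _] _ _] := hvp.
have [vKp_val vKp_iota _ _] := hKp.
have [_ vh_val vh_j] := hOm.
have vh_iota x : vh (j (iota x)) = vp x by rewrite vh_j vKp_iota.
have w_eval := eval_valuations_agree subA frac vp_val hw vh_val hwext vh_iota hwP.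
apply: w_reduced_of_lead_bound => // k lam lt_kn.
have size_g m : (m <= k)%N -> size (g m) = m.+1.
  by move=> le_mk; have [_ [_ _ ]] := hg m (leq_ltn_trans le_mk lt_kn); rewrite size_map_poly.
have [_ gk_div] := hg k lt_kn.
have [_ gk_monic _ _ _] := gk_div; rewrite map_monic in gk_monic.
have [->|lamk_neq0] := eqVneq (lam k) 0; first by rewrite scale0r valuation0 // vle_inf.
have size_H := size_triangular_comb size_g lamk_neq0.
have lead_H := lead_coef_triangular_comb size_g gk_monic lamk_neq0.
set H := \sum_(m < k.+1) lam m *: g m in size_H lead_H.
have -> : \sum_(m < k.+1) lam m *: (map_poly (in_alg L) (g m)).[theta]
    = (map_poly (in_alg L) H).[theta].
  rewrite -[RHS]/(horner_alg theta H) linear_sum; apply: eq_bigr => m _.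
  by rewrite linearZ /= mulr_algl.
rewrite -mulr_algl valuationM // hwext !w_eval -lead_H -vKp_iota.
apply: vle_trans (divisor_polynomial_bound vKp_val vh_val vh_j gk_div _) _.
  by rewrite size_map_poly.
apply: vle_vaddr; rewrite lead_coefE size_H -coef_map.
exact: v0_le_coef.
Qed.
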